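(* Suppose that $G$ is a group with a finite-index characteristic subgroup $A\cong\mathbb{Z}^m$, and that there is a homomorphism $\operatorname{sgn}\colon G\to\{1,-1\}$ such that for all $g\in G$ and $x\in A$ we have $g^{-1}xg=x^{\operatorname{sgn}(g)}$. Then the group $P_{A,G}$ of automorphisms of $A$ that extend to automorphisms of $G$ has finite index in $\operatorname{Aut}(A)$. *)

(* Groups G here are possibly infinite, so they are given as a carrier type
   with explicit operations and axioms. *)
From Stdlib Require List.
From mathcomp Require Import all_boot all_order all_algebra.
Set Implicit Arguments. Unset Strict Implicit. Unset Printing Implicit Defensive.
Import GRing.Theory Num.Theory.
Local Open Scope ring_scope.

Section GroupDefs.
Variables (T : Type) (mul : T -> T -> T) (one : T) (inv : T -> T).

Definition is_group : Prop :=
  [/\ (forall x y z, mul x (mul y z) = mul (mul x y) z),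
      (forall x, mul one x = x), (forall x, mul x one = x),
      (forall x, mul (inv x) x = one) & (forall x, mul x (inv x) = one)].

Definition is_subgroup (A : T -> Prop) : Prop :=
  [/\ A one, (forall x y, A x -> A y -> A (mul x y)) & (forall x, A x -> A (inv x))].

Definition finite_index (A : T -> Prop) : Prop :=
  exists s : list T, forall g, exists2 r, List.In r s & A (mul (inv r) g).

Definition is_aut (f : T -> T) : Prop :=
  (forall x y, f (mul x y) = mul (f x) (f y)) /\
  exists g : T -> T, (forall x, g (f x) = x) /\ (forall x, f (g x) = x).

Definition characteristic (A : T -> Prop) : Prop :=
  forall f, is_aut f -> forall x, A (f x) <-> A x.

Definition iso_Zm (A : T -> Prop) (m : nat) : Prop :=
  exists phi : T -> 'rV[int]_m,
    [/\ (forall x y, A x -> A y -> phi (mul x y) = phi x + phi y),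
        (forall x y, A x -> A y -> phi x = phi y -> x = y) &
        (forall v, exists2 x, A x & phi x = v)].

Definition is_autA (A : T -> Prop) (a : T -> T) : Prop :=
  [/\ (forall x, A x -> A (a x)),
      (forall x y, A x -> A y -> a (mul x y) = mul (a x) (a y)) &
      exists b : T -> T, [/\ (forall x, A x -> A (b x)),
                             (forall x, A x -> b (a x) = x) &
                             (forall x, A x -> a (b x) = x)]].

Definition extends_to_aut (A : T -> Prop) (a : T -> T) : Prop :=
  is_autA A a /\ exists f, is_aut f /\ forall x, A x -> f x = a x.

(* P_{A,G} has finite index in Aut(A): finitely many automorphisms r of A
   such that every automorphism of A lies in some left coset r P_{A,G}
   (equality of automorphisms of A = pointwise equality on A). *)
Definition PAG_finite_index (A : T -> Prop) : Prop :=
  exists s : list (T -> T),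
    (forall r, List.In r s -> is_autA A r) /\
    forall a, is_autA A a ->
      exists2 r, List.In r s &
        exists2 p, extends_to_aut A p & forall x, A x -> a x = r (p x).

End GroupDefs.

(* Fix a left transversal t_1, ..., t_k of A in G and write g t_i = t_(pi_g i) a_i(g) with
   a_i(g) in A = Z^m.  The twisted transfer Gamma(g) = sum_i sgn(t_i) a_i(g) satisfies
   Gamma(gh) = sgn(h) Gamma(g) + Gamma(h) and Gamma(x) = k x on A (sgn is trivial on A because
   Z^m is torsion free).  Hence every automorphism p of A with p = 1 mod k extends to the
   automorphism g |-> g ((p - 1)/k)(Gamma(g)) of G, so P_{A,G} contains the level-k congruence
   subgroup of Aut(A) = GL_m(Z); automorphisms with the same reduction mod k lie in the same
   coset of it, and there are finitely many reductions. *)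

From HB Require Import structures.
From mathcomp Require Import all_boot all_order all_algebra.
From Stdlib Require Import Classical IndefiniteDescription.
Set Implicit Arguments. Unset Strict Implicit. Unset Printing Implicit Defensive.
Import GRing.Theory Num.Theory.
Local Open Scope ring_scope.

Section GroupLemmas.
Variables (T : Type) (mul : T -> T -> T) (one : T) (inv : T -> T).
Hypothesis HG : is_group mul one inv.

Lemma gmulA x y z : mul x (mul y z) = mul (mul x y) z.
Proof. by case: HG. Qed.
Lemma gmul1l x : mul one x = x. Proof. by case: HG. Qed.
Lemma gmul1r x : mul x one = x. Proof. by case: HG. Qed.
Lemma gmulVl x : mul (inv x) x = one. Proof. by case: HG. Qed.
Lemma gmulVr x : mul x (inv x) = one. Proof. by case: HG. Qed.
Lemma gmulKl x y : mul (inv x) (mul x y) = y.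
Proof. by rewrite gmulA gmulVl gmul1l. Qed.
Lemma gmulKVl x y : mul x (mul (inv x) y) = y.
Proof. by rewrite gmulA gmulVr gmul1l. Qed.
Lemma gmulI x y z : mul x y = mul x z -> y = z.
Proof. by move=> E; rewrite -(gmulKl x y) E gmulKl. Qed.
Lemma ginv_unique x y : mul x y = one -> y = inv x.
Proof. by move=> E; rewrite -(gmulKl x y) E gmul1r. Qed.
Lemma ginvK x : inv (inv x) = x.
Proof. by symmetry; apply: ginv_unique; rewrite gmulVl. Qed.
Lemma ginvM x y : inv (mul x y) = mul (inv y) (inv x).
Proof. by symmetry; apply: ginv_unique; rewrite -gmulA gmulKVl gmulVr. Qed.

Section Homomorphism.
Variable f : T -> T.
Hypothesis fM : forall x y, f (mul x y) = mul (f x) (f y).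

Lemma ghom1 : f one = one.
Proof. by apply: (@gmulI (f one)); rewrite -fM !gmul1r. Qed.
Lemma ghomV x : f (inv x) = inv (f x).
Proof. by apply: ginv_unique; rewrite -fM gmulVr ghom1. Qed.

End Homomorphism.

Section Subgroup.
Variable A : T -> Prop.
Hypothesis HA : is_subgroup mul one inv A.

Lemma subg1 : A one. Proof. by case: HA. Qed.
Lemma subgM x y : A x -> A y -> A (mul x y). Proof. by case: HA => _ + _; apply. Qed.
Lemma subgV x : A x -> A (inv x). Proof. by case: HA => _ _; apply. Qed.

Lemma is_aut_coset_preserving f :
  (forall x y, f (mul x y) = mul (f x) (f y)) ->
  (forall g, A (mul (inv g) (f g))) ->
  (forall x, A x -> f x = one -> x = one) ->
  (forall y, A y -> exists2 x, A x & f x = y) ->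
  is_aut mul f.
Proof.
move=> fM fA f_ker f_onto.
have f_inj g h : f g = f h -> g = h.
  move=> E; suff u1 : mul (inv h) g = one by rewrite -(gmulKVl h g) u1 gmul1r.
  apply: f_ker; last by rewrite fM (ghomV fM) E gmulVl.
  have := subgM (fA h) (subgV (fA g)).
  by rewrite ginvM ginvK E -gmulA gmulKVl.
have f_surj y : exists x, f x = y.
  have [z Az fz] := f_onto _ (subgV (fA y)).
  by exists (mul y z); rewrite fM fz ginvM ginvK gmulKVl.
have [g fK] := functional_choice _ f_surj.
by split=> //; exists g; split=> // x; apply: f_inj.
Qed.

Lemma transversal_of_seq (s : seq T) : exists t : seq T,
  (forall g, (exists2 r, List.In r s & A (mul (inv r) g)) ->
     exists2 i, (i < size t)%N & A (mul (inv (nth one t i)) g)) /\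
  (forall i j, (i < size t)%N -> (j < size t)%N ->
     A (mul (inv (nth one t i)) (nth one t j)) -> i = j).
Proof.
elim: s => [|r s [t [t_cover t_sep]]].
  by exists [::]; split=> // g [r []].
case: (classic (exists2 i, (i < size t)%N & A (mul (inv (nth one t i)) r))).
  case=> i ti rA; exists t; split=> // g [r' /= [<-|r's] gA]; last by apply: t_cover; exists r'.
  by exists i => //; have := subgM rA gA; rewrite -gmulA gmulKVl.
move=> r_new; exists (r :: t); split.
  move=> g [r' /= [<-|r's] gA]; first by exists 0%N.
  by case: (t_cover g) => [|i ti giA]; [exists r' | exists i.+1].
case=> [|i] [|j] //= ti tj ijA.
- by exfalso; apply: r_new; exists j => //; rewrite -(ginvK r) -ginvM; apply: subgV.
- by exfalso; apply: r_new; exists i.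
- by congr S; apply: t_sep.
Qed.

Lemma exists_transversal : finite_index mul inv A ->
  exists k (rep : 'I_k -> T),
    (forall g, exists i, A (mul (inv (rep i)) g)) /\
    (forall i j, A (mul (inv (rep i)) (rep j)) -> i = j).
Proof.
case=> s s_cover; have [t [t_cover t_sep]] := transversal_of_seq s.
exists (size t), (fun i => nth one t i); split.
  by move=> g; have [i ti gA] := t_cover g (s_cover g); exists (Ordinal ti).
by move=> i j ijA; apply: val_inj; apply: t_sep; rewrite ?ltn_ord.
Qed.

End Subgroup.
End GroupLemmas.

Lemma finite_representatives (X : Type) (K : finType) (P : X -> Prop) (key : X -> K) :
  exists s : seq X, (forall r, List.In r s -> P r) /\
    forall a, P a -> exists2 r, List.In r s & key r = key a.
Proof.
suff [s [sP s_keys]] : exists s : seq X, (forall r, List.In r s -> P r) /\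
    forall a, P a -> key a \in enum K -> exists2 r, List.In r s & key r = key a.
  by exists s; split=> // a Pa; apply: s_keys; rewrite ?mem_enum.
elim: (enum K) => [|c cs [s [sP s_keys]]]; first by exists [::].
case: (classic (exists a, P a /\ key a = c)) => [[a [Pa ac]]|no_c].
  exists (a :: s); split=> [r /= [<-|] //|b Pb]; first exact: sP.
  rewrite in_cons => /orP[/eqP bc|bs]; first by exists a; [left | rewrite ac].
  by have [r rs rb] := s_keys b Pb bs; exists r; [right|].
exists s; split=> // b Pb; rewrite in_cons => /orP[/eqP bc|]; last exact: s_keys.
by case: no_c; exists b.
Qed.

Section IntMatrices.
Variables p q : nat.
Implicit Types (M : 'M[int]_(p, q)) (N : int).

Definition dvdmx N M := forall i j, (N %| M i j)%Z.
Definition divmx N M := map_mx (divz^~ N) M.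

Let mxzE M z i j : (M *~ z) i j = M i j * z.
Proof. by rewrite -scaler_int mxE intz mulrC. Qed.

Lemma dvdmxD N (M1 M2 : 'M[int]_(p, q)) : dvdmx N M1 -> dvdmx N M2 -> dvdmx N (M1 + M2).
Proof. by move=> d1 d2 i j; rewrite mxE rpredD. Qed.

Lemma dvdmxMz N M z : dvdmx N M -> dvdmx N (M *~ z).
Proof. by move=> dM i j; rewrite mxzE dvdz_mulr. Qed.

Lemma dvdmx_sum N (I : finType) (F : I -> 'M[int]_(p, q)) :
  (forall i, dvdmx N (F i)) -> dvdmx N (\sum_i F i).
Proof.
move=> dF; apply: (big_ind (dvdmx N)) => [i j|M1 M2|i _]; last exact: dF.
  by rewrite mxE dvdz0.
exact: dvdmxD.
Qed.

Lemma dvdmx_mulz N M : dvdmx N (M *~ N).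
Proof. by move=> i j; rewrite mxzE dvdz_mull. Qed.

Lemma divmxK N M : dvdmx N M -> divmx N M *~ N = M.
Proof. by move=> dM; apply/matrixP => i j; rewrite mxzE mxE divzK. Qed.

Lemma divmxDl N (M1 M2 : 'M[int]_(p, q)) :
  dvdmx N M1 -> divmx N (M1 + M2) = divmx N M1 + divmx N M2.
Proof. by move=> d1; apply/matrixP => i j; rewrite !mxE divzDl. Qed.

Lemma mulmxzK N M : N != 0 -> divmx N (M *~ N) = M.
Proof. by move=> N0; apply/matrixP => i j; rewrite mxE mxzE mulzK. Qed.

Lemma mx_eqN_eq0 M : M = - M -> M = 0.
Proof.
move/matrixP=> MN; apply/matrixP => i j.
by have /eqP := MN i j; rewrite !mxE eq_sym eqNr => /eqP.
Qed.

End IntMatrices.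

Section AdditiveRowMaps.
Variables (m n : nat) (F : 'rV[int]_m -> 'rV[int]_n).
Hypothesis FD : {morph F : u w / u + w}.

Fact addf_is_nmod_morphism : nmod_morphism F.
Proof. by split=> //; apply: (@addrI _ (F 0)); rewrite -FD !addr0. Qed.
HB.instance Definition _ := GRing.isNmodMorphism.Build _ _ F addf_is_nmod_morphism.

Lemma addfB u w : F (u - w) = F u - F w. Proof. exact: raddfB. Qed.
Lemma addfMz u z : F (u *~ z) = F u *~ z. Proof. exact: raddfMz. Qed.

Lemma addf_row_expand u : F u = \sum_j F 'e_j *~ u 0 j.
Proof.
rewrite {1}[u]row_sum_delta raddf_sum; apply: eq_bigr => j _.
by rewrite -raddfMz -scaler_int intz.
Qed.

Lemma addf_dvdmx N u : dvdmx N u -> dvdmx N (F u).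
Proof. by move=> du; rewrite -(divmxK du) raddfMz; apply: dvdmx_mulz. Qed.

End AdditiveRowMaps.

Section AutomorphismsOfSubgroup.
Variables (T : Type) (mul : T -> T -> T) (one : T) (inv : T -> T).
Variable A : T -> Prop.
Hypothesis HA : is_subgroup mul one inv A.

Lemma is_autA_comp a b :
  is_autA mul A a -> is_autA mul A b -> is_autA mul A (fun x => b (a x)).
Proof.
case=> aA aM [a' [a'A a'K aK]] [bA bM [b' [b'A b'K bK]]]; split.
- by move=> x Ax; apply/bA/aA.
- by move=> x y Ax Ay; rewrite aM // bM //; apply: aA.
exists (fun x => a' (b' x)); split.
- by move=> x Ax; apply/a'A/b'A.
- by move=> x Ax; rewrite b'K ?a'K //; apply: aA.
- by move=> x Ax; rewrite aK ?bK //; apply: b'A.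
Qed.

Lemma is_autA_inverse a b : is_autA mul A a ->
  (forall x, A x -> A (b x)) -> (forall x, A x -> b (a x) = x) ->
  (forall x, A x -> a (b x) = x) -> is_autA mul A b.
Proof.
case=> aA aM _ bA bK aK; split=> //; last by exists a.
move=> x y Ax Ay; have bxyA : A (mul (b x) (b y)) by apply: (subgM HA); apply: bA.
by rewrite -{1}(aK x Ax) -{1}(aK y Ay) -aM ?bK //; apply: bA.
Qed.

End AutomorphismsOfSubgroup.

Definition residue n (z : int) : 'I_n.+1 := inord `|(z %% n.+1)%Z|.

Lemma residue_eq n y z : residue n y = residue n z -> (n.+1 %| y - z)%Z.
Proof.
have res_lt x : (`|(x %% n.+1)%Z| < n.+1)%N.
  by rewrite -ltz_nat gez0_abs ?modz_ge0 ?ltz_pmod.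
move/(congr1 val); rewrite /= !inordK // => /(congr1 Posz).
by rewrite !gez0_abs ?modz_ge0 // => /eqP; rewrite eqz_mod_dvd.
Qed.

Section IsoZm.
Variables (T : Type) (mul : T -> T -> T) (one : T) (inv : T -> T).
Hypothesis HG : is_group mul one inv.
Variable A : T -> Prop.
Hypothesis HA : is_subgroup mul one inv A.
Variables (m : nat) (phi : T -> 'rV[int]_m) (psi : 'rV[int]_m -> T).
Hypothesis phiM : forall x y, A x -> A y -> phi (mul x y) = phi x + phi y.
Hypothesis phi_inj : forall x y, A x -> A y -> phi x = phi y -> x = y.
Hypothesis psiA : forall v, A (psi v).
Hypothesis psiK : forall v, phi (psi v) = v.

Lemma phi1 : phi one = 0.
Proof.
by apply: (@addrI _ (phi one)); rewrite -phiM ?(gmul1l HG) ?addr0 //; apply: (subg1 HA).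
Qed.

Lemma phiV x : A x -> phi (inv x) = - phi x.
Proof.
move=> Ax; apply: (@addrI _ (phi x)).
by rewrite -phiM ?(gmulVr HG) ?phi1 ?subrr //; apply: (subgV HA).
Qed.

Lemma phiK x : A x -> psi (phi x) = x.
Proof. by move=> Ax; apply: phi_inj; rewrite ?psiK. Qed.

Lemma psiD u w : psi (u + w) = mul (psi u) (psi w).
Proof. by apply: phi_inj; rewrite ?phiM ?psiK //; apply: (subgM HA). Qed.

Definition aut_row (a : T -> T) v := phi (a (psi v)).

Definition congruent_id N a := forall v, dvdmx N (aut_row a v - v).

Lemma aut_rowD a : is_autA mul A a -> {morph aut_row a : u w / u + w}.
Proof. by case=> aA aM _ u w; rewrite /aut_row psiD aM // phiM //; apply: aA. Qed.

Lemma aut_row_comp a b v : (forall x, A x -> A (a x)) ->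
  aut_row (fun x => b (a x)) v = aut_row b (aut_row a v).
Proof. by move=> aA; rewrite /aut_row phiK //; apply: aA. Qed.

Definition aut_key n a : 'M['I_n.+1]_m :=
  \matrix_(i, j) residue n (aut_row a 'e_i 0 j).

Lemma aut_key_eq n a r : is_autA mul A a -> is_autA mul A r ->
  aut_key n a = aut_key n r -> forall v, dvdmx n.+1 (aut_row a v - aut_row r v).
Proof.
move=> Ha Hr ar v.
rewrite (addf_row_expand (aut_rowD Ha)) (addf_row_expand (aut_rowD Hr)) -sumrB.
apply: dvdmx_sum => i; rewrite -mulrzBl; apply: dvdmxMz => i0 j.
rewrite (ord1 i0) !mxE; apply: residue_eq.
by have := congr1 (fun K : 'M['I_n.+1]_m => K i j) ar; rewrite !mxE.
Qed.

Lemma PAG_finite_index_of_congruent n :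
  (forall p, is_autA mul A p -> congruent_id n.+1 p -> extends_to_aut mul A p) ->
  PAG_finite_index mul A.
Proof.
move=> ext_congr.
have [s [sA s_keys]] := finite_representatives (is_autA mul A) (aut_key n).
exists s; split=> // a Ha; have [r rs key_ra] := s_keys a Ha.
have Hr := sA r rs; case: (Hr) => rA _ [rb [rbA rbK rK]].
have Hrb := is_autA_inverse HA Hr rbA rbK rK.
case: (Ha) => aA _ _.
exists r => //; exists (fun x => rb (a x)); last by move=> x Ax; rewrite rK //; apply: aA.
apply: ext_congr; first exact: is_autA_comp.
move=> v; have rbK_row w : aut_row rb (aut_row r w) = w.
  by rewrite -aut_row_comp // /aut_row rbK ?psiK.
rewrite aut_row_comp // -{2}(rbK_row v) -addfB; last exact: aut_rowD.
by apply: addf_dvdmx; [exact: aut_rowD | apply: aut_key_eq].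
Qed.

Section Transfer.
Variable sgn : T -> int.
Hypothesis sgn_val : forall g, sgn g = 1 \/ sgn g = -1.
Hypothesis sgnM : forall g h, sgn (mul g h) = sgn g * sgn h.
Hypothesis conj_sgn : forall g x, A x ->
  mul (inv g) (mul x g) = (if sgn g == 1 then x else inv x).

Lemma sgn_sqr g : sgn g * sgn g = 1.
Proof. by case: (sgn_val g) => ->. Qed.

Lemma sgn1 : sgn one = 1.
Proof. by rewrite -[one](gmul1l HG) sgnM sgn_sqr. Qed.

(* Conjugation by x fixes x, and Z^m has no element of order 2. *)
Lemma sgnA x : A x -> sgn x = 1.
Proof.
move=> Ax; have := conj_sgn x Ax; rewrite (gmulKl HG); case: eqP => // _ xV.
suff -> : x = one by exact: sgn1.
apply: phi_inj => //; first exact: (subg1 HA).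
by rewrite phi1; apply: mx_eqN_eq0; rewrite -phiV // -xV.
Qed.

Lemma conjA h y : A y -> mul (inv h) (mul y h) = psi (phi y *~ sgn h).
Proof.
move=> Ay; rewrite conj_sgn //; case: (sgn_val h) => ->; first by rewrite mulr1z phiK.
by rewrite mulrN1z -phiV ?phiK //; apply: (subgV HA).
Qed.

Variables (k : nat) (rep : 'I_k -> T) (cidx : T -> 'I_k).
Hypothesis rep_sep : forall i j, A (mul (inv (rep i)) (rep j)) -> i = j.
Hypothesis cidxP : forall g, A (mul (inv (rep (cidx g))) g).

Lemma cidx_eq g i : A (mul (inv (rep i)) g) -> cidx g = i.
Proof.
move=> giA; apply: rep_sep; have := subgM HA (cidxP g) (subgV HA giA).
by rewrite (ginvM HG) (ginvK HG) -(gmulA HG) (gmulKVl HG).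
Qed.

Definition coset_perm g i := cidx (mul g (rep i)).
Definition cocycle g i := mul (inv (rep (coset_perm g i))) (mul g (rep i)).

Lemma cocycleA g i : A (cocycle g i). Proof. exact: cidxP. Qed.

Lemma coset_perm_inj g : injective (coset_perm g).
Proof.
move=> i j ij; apply: rep_sep.
have := subgM HA (subgV HA (cocycleA g i)) (cocycleA g j).
rewrite /cocycle ij (ginvM HG) (ginvK HG) -(gmulA HG) (gmulKVl HG).
by rewrite (ginvM HG) -(gmulA HG) (gmulKl HG).
Qed.

Lemma mul_cocycle g h i :
  mul (cocycle g (coset_perm h i)) (cocycle h i) =
    mul (inv (rep (coset_perm g (coset_perm h i)))) (mul (mul g h) (rep i)).
Proof. by rewrite /cocycle -!(gmulA HG) (gmulKVl HG). Qed.

Lemma coset_permM g h i : coset_perm (mul g h) i = coset_perm g (coset_perm h i).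
Proof.
by apply: cidx_eq; rewrite -mul_cocycle; exact: (subgM HA (cocycleA _ _) (cocycleA _ _)).
Qed.

Lemma cocycleM g h i :
  cocycle (mul g h) i = mul (cocycle g (coset_perm h i)) (cocycle h i).
Proof. by rewrite mul_cocycle /cocycle coset_permM. Qed.

Lemma sgn_rep h i : sgn (rep i) = sgn h * sgn (rep (coset_perm h i)).
Proof.
have E : mul h (rep i) = mul (rep (coset_perm h i)) (cocycle h i).
  by rewrite /cocycle (gmulKVl HG).
have := congr1 sgn E; rewrite (sgnM (rep _)) (sgnA (cocycleA h i)) mulr1 sgnM => <-.
by rewrite mulrA sgn_sqr mul1r.
Qed.

Lemma cocycle_A x i : A x -> cocycle x i = psi (phi x *~ sgn (rep i)).
Proof.
move=> Ax; rewrite /cocycle -conjA //; congr (mul (inv (rep _)) _).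
by apply: cidx_eq; rewrite conj_sgn //; case: ifP => _ //; apply: (subgV HA).
Qed.

Definition transfer g := \sum_i phi (cocycle g i) *~ sgn (rep i).

Lemma transferM g h : transfer (mul g h) = transfer g *~ sgn h + transfer h.
Proof.
rewrite /transfer (eq_bigr (fun i => phi (cocycle g (coset_perm h i)) *~ sgn (rep i)
                                  + phi (cocycle h i) *~ sgn (rep i))); last first.
  by move=> i _; rewrite cocycleM phiM ?mulrzDl //; apply: cocycleA.
rewrite big_split /= mulrz_suml; congr (_ + _).
rewrite [RHS](reindex_inj (@coset_perm_inj h)) /=.
by apply: eq_bigr => i _; rewrite -mulrzA mulrC -sgn_rep.
Qed.

Lemma transfer_A x : A x -> transfer x = phi x *~ k.
Proof.
move=> Ax; rewrite /transfer (eq_bigr (fun=> phi x)).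
  by rewrite sumr_const card_ord -mulrz_nat natz.
by move=> i _; rewrite cocycle_A // psiK -mulrzA sgn_sqr mulr1z.
Qed.

Section Extension.
Variable p : T -> T.
Hypothesis Hp : is_autA mul A p.
Hypothesis p_congr : congruent_id k p.

Definition shift v := divmx k (aut_row p v - v).

Lemma shiftD : {morph shift : u w / u + w}.
Proof.
by move=> u w; rewrite /shift aut_rowD // opprD addrACA; apply: divmxDl.
Qed.

Lemma shift_mulrz v : shift (v *~ k) = aut_row p v - v.
Proof.
have k_neq0 : k%:Z != 0 by rewrite eqz_nat -lt0n (leq_ltn_trans _ (ltn_ord (cidx one))).
by rewrite /shift (addfMz (aut_rowD Hp)) -mulrzBl mulmxzK.
Qed.

Definition ext_aut g := mul g (psi (shift (transfer g))).

Lemma ext_autM g h : ext_aut (mul g h) = mul (ext_aut g) (ext_aut h).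
Proof.
rewrite /ext_aut transferM shiftD (addfMz shiftD) psiD.
rewrite -{1}[shift (transfer g)]psiK -conjA //.
by rewrite -!(gmulA HG) (gmulKVl HG).
Qed.

Lemma ext_aut_A x : A x -> ext_aut x = p x.
Proof.
case: Hp => pA _ _ Ax; apply: phi_inj; [exact: (subgM HA) | exact: pA |].
by rewrite phiM // psiK transfer_A // shift_mulrz addrC subrK /aut_row phiK.
Qed.

Lemma ext_aut_coset g : A (mul (inv g) (ext_aut g)).
Proof. by rewrite /ext_aut (gmulKl HG). Qed.

Lemma ext_aut_is_aut : is_aut mul ext_aut.
Proof.
case: (Hp) => pA _ [b [bA bK pK]]; have A1 := subg1 HA.
have p1 : p one = one by rewrite -ext_aut_A ?(ghom1 HG ext_autM).
apply: (is_aut_coset_preserving HG HA ext_autM ext_aut_coset).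
  by move=> x Ax x1; rewrite -(bK x Ax) -ext_aut_A // x1 -{1}p1 bK.
by move=> y Ay; exists (b y); rewrite ?ext_aut_A ?pK //; apply: bA.
Qed.

Lemma extends_of_congruent : extends_to_aut mul A p.
Proof. by split=> //; exists ext_aut; split; [exact: ext_aut_is_aut | exact: ext_aut_A]. Qed.

End Extension.
End Transfer.
End IsoZm.

Theorem mainTheorem19 (T : Type) (mul : T -> T -> T) (one : T) (inv : T -> T)
  (HG : is_group mul one inv) (A : T -> Prop) (m : nat)
  (HA : is_subgroup mul one inv A) (Hfin : finite_index mul inv A)
  (Hchar : characteristic mul A) (HZm : iso_Zm mul A m)
  (sgn : T -> int)
  (Hsgn_val : forall g, sgn g = 1 \/ sgn g = -1)
  (Hsgn_hom : forall g h, sgn (mul g h) = sgn g * sgn h)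
  (Hconj : forall g x, A x ->
     mul (inv g) (mul x g) = (if sgn g == 1 then x else inv x)) :
  PAG_finite_index mul A.
Proof.
have [phi [phiM phi_inj phi_surj]] := HZm.
have /functional_choice [psi psiP] : forall v, exists x, A x /\ phi x = v.
  by move=> v; have [x] := phi_surj v; exists x.
have [k [rep [rep_cover rep_sep]]] := exists_transversal HG HA Hfin.
have {rep_cover} [cidx cidxP] := functional_choice _ rep_cover.
case: k => [|n] in rep rep_sep cidx cidxP *; first by case: (cidx one).
have psiA v := (psiP v).1; have psiK v := (psiP v).2.
apply: (PAG_finite_index_of_congruent HA phiM phi_inj psiA psiK) => p Hp.
exact: (extends_of_congruent HG HA phiM phi_inj psiA psiK Hsgn_val Hsgn_hom Hconj rep_sep cidxP Hp).
Qed.
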